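(* Suppose $(X_k)_{k=1}^\infty$, $X$ and $Y$ are shift spaces over a finite alphabet $\mathscr{A}$ such that $\underline d^H(X_k,X)\to0$ and $\underline d^H(X_k,Y)\to0$ as $k\to\infty$. Then $\mathcal M_\sigma(X)=\mathcal M_\sigma(Y)$.
   Context: $\underline d(x,y)=\liminf_{n}\frac1n|\{0\le j<n:x_j\ne y_j\}|$ on $\mathscr{A}^{\mathbb N_0}$ (not a pseudometric: it need not satisfy the triangle inequality), and $\underline d^H(A,B)=\max\{\sup_{a\in A}\inf_{b\in B}\underline d(a,b),\sup_{b\in B}\inf_{a\in A}\underline d(a,b)\}$. $\mathcal M_\sigma(X)$ is the set of shift-invariant Borel probability measures supported on $X$. *)

From HB Require Import structures.
From mathcomp Require Import all_boot all_order all_algebra.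
From mathcomp Require Import all_classical all_reals all_analysis.
Set Implicit Arguments. Unset Strict Implicit. Unset Printing Implicit Defensive.
Import Order.TTheory GRing.Theory Num.Theory.
Local Open Scope classical_set_scope.
Local Open Scope ring_scope.

Section ShiftDefs.
Variable A : finType.

Definition shseq := nat -> A.

Definition shift (x : shseq) : shseq := fun n => x n.+1.

(* Open sets of the product topology (A discrete): unions of cylinders. *)
Definition shopen (U : set shseq) : Prop :=
  forall x, U x -> exists n : nat,
    forall y : shseq, (forall i, (i < n)%N -> y i = x i) -> U y.

Definition shclosed (X : set shseq) : Prop := shopen (~` X).

Definition shift_space (X : set shseq) : Prop :=
  [/\ X !=set0, shclosed X & shift @` X `<=` X].

(* The full shift as a pointed type (the alphabet is nonempty, witnessed by
   a0; the point is only needed by MathComp-Analysis' measurableType). *)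
Definition pshseq (a0 : A) := shseq.
HB.instance Definition _ (a0 : A) := Choice.on (pshseq a0).
HB.instance Definition _ (a0 : A) := isPointed.Build (pshseq a0) (fun _ => a0).

Definition borel_shseq (a0 : A) := g_sigma_algebraType (@shopen : set (set (pshseq a0))).

Definition mismatch_freq (R : realType) (x y : shseq) (n : nat) : R :=
  (count (fun j => x j != y j) (iota 0 n))%:R / n%:R.

Definition dlow (R : realType) (x y : shseq) : R :=
  limn_inf (mismatch_freq R x y).

Definition dlowH (R : realType) (X Y : set shseq) : R :=
  Num.max (sup [set (inf [set dlow R a b | b in Y]) | a in X])
          (sup [set (inf [set dlow R a b | a in X]) | b in Y]).

Definition Msigma (a0 : A) (R : realType) (X : set shseq) :
    set (probability (borel_shseq a0) R) :=
  [set mu : probability (borel_shseq a0) R |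
     (forall B : set (borel_shseq a0), measurable B ->
        mu (shift @^-1` B) = mu B)
     /\ mu (X : set (borel_shseq a0)) = 1%E].

End ShiftDefs.

Arguments Msigma {A} a0 R X.

From Pilot Require Import Defs.
From HB Require Import structures.
From mathcomp Require Import all_boot all_order all_algebra.
From mathcomp Require Import all_classical all_reals all_analysis.
From mathcomp Require Import zify ring lra.
Import Order.TTheory GRing.Theory Num.Theory numFieldNormedType.Exports.
Set Implicit Arguments. Unset Strict Implicit. Unset Printing Implicit Defensive.
Local Open Scope classical_set_scope.

(* By symmetry it suffices to show that an invariant probability mu with
   mu(X) = 1 gives full measure to Y.  Since Y is closed, its complement is
   the union over m of the sets [avoid Y m] of points whose first m symbols
   agree with no point of Y, so it is enough to show mu(avoid Y m) = 0.

   The tool is the visit count [occ C x N] = #{i < N | sigma^i x \in C}, for a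
   set C determined by the first m coordinates ([finitary m C]):
   - transfer: if all points of a set W satisfy occ C w N <= r N + M, and every
     point of a closed invariant set Z is e-close in lower density to a point
     of W, then all points of Z satisfy occ C z N <= (r + (2m+1)e) N + M'.
     This combines a compactness argument (a uniform bound on the length of a
     good initial window) with a greedy concatenation of good windows;
   - measure bound: for an invariant mu with mu(X) = 1, a bound
     occ C x N <= r N + M on X forces mu(C) <= r (integrate the visit count).
   Points of Y never visit [avoid Y m]; transferring this along Y -> X_k -> X
   with e small shows mu(avoid Y m) <= 2(2m+1)e for every e > 0. *)

Lemma sum_shift_le (q : nat -> nat) n j :
  (\sum_(i < n) q (i + j) <= \sum_(i < n + j) q i)%N.
Proof.
elim: n => [|n IH]; first by rewrite big_ord0.
by rewrite big_ord_recr /= addSn big_ord_recr /= leq_add2r.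
Qed.

Lemma sum_prefix_le (q : nat -> nat) k l : (k <= l)%N ->
  (\sum_(i < k) q i <= \sum_(i < l) q i)%N.
Proof.
move=> kl; rewrite (big_ord_widen l q kl) big_mkcond /=.
by apply: leq_sum => i _; case: ifP.
Qed.

(* Counting with a window: if every index i counted by p is either counted by
   r or has a q-index in the window [i, i + m), then p is dominated by r plus
   m times the q-count, since each q-index lies in at most m windows. *)
Lemma sum_window_bound (p r q : nat -> bool) n m :
  (forall i, (i < n)%N -> p i -> r i \/ exists2 j, (j < m)%N & q (i + j)) ->
  (\sum_(i < n) p i <= \sum_(i < n) r i + m * \sum_(i < n + m) q i)%N.
Proof.
move=> hp.
apply: (@leq_trans (\sum_(i < n) (r i + \sum_(j < m) q (i + j)))%N).
  apply: leq_sum => i _; case pi: (p i) => //=.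
  have [-> | [j jm qj]] := hp i (ltn_ord i) pi; first by rewrite leq_addr.
  by rewrite (bigD1 (Ordinal jm)) //= qj add1n addnS.
rewrite big_split /= leq_add2l exchange_big /=.
apply: (@leq_trans (\sum_(j < m) \sum_(i < n + m) q i)%N).
  apply: leq_sum => j _; apply: leq_trans (sum_shift_le (nat_of_bool \o q) n j) _.
  by apply: (sum_prefix_le (nat_of_bool \o q)); rewrite leq_add2l ltnW.
by rewrite sum_nat_const card_ord.
Qed.

Section VisitCounts.
Variable A : finType.
Implicit Types (x y z : shseq A) (C Z : set (shseq A)).

Definition shiftn (i : nat) x : shseq A := fun j => x (i + j)%N.

Definition occ C x n : nat := (\sum_(i < n) `[< C (shiftn i x) >])%N.

Definition mism x y n : nat := (\sum_(i < n) (x i != y i))%N.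

Definition finitary (m : nat) C :=
  forall x x', (forall j, (j < m)%N -> x j = x' j) -> C x -> C x'.

Lemma finitary_open m C : finitary m C -> shopen C.
Proof. by move=> hC x Cx; exists m => y hy; apply: hC Cx => j /hy. Qed.

Lemma finitary_shiftn_preimage m C i :
  finitary m C -> finitary (i + m) (shiftn i @^-1` C).
Proof. by move=> hC x x' hx; apply: hC => j jm; apply: hx; rewrite ltn_add2l. Qed.

Lemma shiftn0 x : shiftn 0 x = x.
Proof. exact/funext. Qed.

Lemma shiftnD i k x : shiftn i (shiftn k x) = shiftn (k + i) x.
Proof. by apply/funext => j; rewrite /shiftn addnA. Qed.

Lemma shiftnS i x : shiftn i.+1 x = shiftn i (Defs.shift x).
Proof. by apply/funext => j; rewrite /shiftn /Defs.shift addSn. Qed.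

Lemma shiftn_invariant Z : @Defs.shift A @` Z `<=` Z ->
  forall i z, Z z -> Z (shiftn i z).
Proof.
move=> hZ i z Zz; elim: i z Zz => [|i IH] z Zz; first by rewrite shiftn0.
by rewrite shiftnS; apply/IH/hZ; exists z.
Qed.

Lemma occ_le C x n : (occ C x n <= n)%N.
Proof.
rewrite -[leqRHS]muln1 -[in leqRHS](card_ord n) -sum_nat_const.
by apply: leq_sum => i _; case: asboolP.
Qed.

Lemma occ_cat C x n k : occ C x (n + k) = (occ C x n + occ C (shiftn n x) k)%N.
Proof.
rewrite /occ big_split_ord /=; congr (_ + _)%N.
by apply: eq_bigr => i _; rewrite shiftnD.
Qed.

Lemma occ_disjoint C Z : (forall i z, Z z -> Z (shiftn i z)) ->
  (forall z, Z z -> ~ C z) -> forall z n, Z z -> occ C z n = 0%N.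
Proof.
move=> hZ hC z n Zz; apply: big1 => i _.
by case: asboolP => // /hC; case; apply: hZ.
Qed.

Lemma occ_agree m C : finitary m C -> forall x x' n,
  (forall j, (j < n + m)%N -> x j = x' j) -> occ C x n = occ C x' n.
Proof.
move=> hC x x' n hx; apply: eq_bigr => i _.
have hi j : (j < m)%N -> shiftn i x j = shiftn i x' j.
  by move=> jm; apply: hx; have := ltn_ord i; lia.
have hi' j : (j < m)%N -> shiftn i x' j = shiftn i x j by move=> /hi ->.
by congr nat_of_bool; apply/asboolP/asboolP => [/(hC _ _ hi) | /(hC _ _ hi')].
Qed.

(* Each disagreement of x and z changes at most m visits to a finitary set. *)
Lemma occ_mism_bound m C : finitary m C -> forall x z n,
  (occ C x n <= occ C z n + m * mism x z (n + m))%N.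
Proof.
move=> hC x z n.
apply: (@sum_window_bound (fun i => `[< C (shiftn i x) >])
  (fun i => `[< C (shiftn i z) >]) (fun k => x k != z k)) => i _ /asboolP Cx.
have [[j jm neq] | agree] :=
  pselect (exists2 j, (j < m)%N & x (i + j)%N != z (i + j)%N).
  by right; exists j.
left; apply/asboolP; apply: hC Cx => j jm.
by apply/eqP; apply: contrapT => /negP neq; apply: agree; exists j.
Qed.

End VisitCounts.

Section Compactness.
Variable A : finType.

Definition frequent (zs : nat -> shseq A) (u : seq A) :=
  forall N, exists2 M, (N <= M)%N & mkseq (zs M) (size u) = u.

(* Pigeonhole: a frequent word has a frequent one-letter extension. *)
Lemma frequent_rcons zs u : frequent zs u -> exists a, frequent zs (rcons u a).
Proof.
move=> fu; apply: contrapT => noext.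
have rare a : exists N, forall M, (N <= M)%N ->
    mkseq (zs M) (size (rcons u a)) <> rcons u a.
  apply: contrapT => ra; apply: noext; exists a => N.
  apply: contrapT => hN; apply: ra; exists N => M NM hM; apply: hN; by exists M.
have [Nf hNf] := choice rare.
have [M NM uM] := fu (\max_(a : A) Nf a).
apply: (hNf (zs M (size u)) M).
  exact: leq_trans (leq_bigmax_cond _ _) NM.
by rewrite size_rcons mkseqS uM.
Qed.

(* Sequential compactness of the full shift (Konig's lemma): every sequence
   has a point whose every prefix is a prefix of zs M for arbitrarily large M. *)
Lemma cluster_point (zs : nat -> shseq A) : exists zl : shseq A,
  forall n N, exists2 M, (N <= M)%N & forall j, (j < n)%N -> zs M j = zl j.
Proof.
pose next u := odflt (zs 0%N 0%N) [pick a | `[< frequent zs (rcons u a) >]].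
have next_frequent u : frequent zs u -> frequent zs (rcons u (next u)).
  move=> /frequent_rcons [a fa]; rewrite /next.
  by case: pickP => [b /asboolP // | /(_ a)]; move/asboolP: fa => ->.
pose fix pre n := if n is n'.+1 then rcons (pre n') (next (pre n')) else [::].
pose zl j := next (pre j).
have preE n : pre n = mkseq zl n by elim: n => //= n IH; rewrite mkseqS -IH.
have pre_frequent n : frequent zs (pre n).
  by elim: n => [N | n IH] /=; [exists N | exact: next_frequent].
exists zl => n N; have [M NM hM] := pre_frequent n N.
exists M => // j jn; move: hM; rewrite preE size_mkseq.
by move=> /(congr1 (nth (zl 0%N))) /(congr1 (@^~ j)); rewrite !nth_mkseq.
Qed.

Lemma compact_uniform (Z : set (shseq A)) (P : shseq A -> nat -> Prop) c :
  shclosed Z ->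
  (forall x x' n, (forall j, (j < n + c)%N -> x j = x' j) -> P x n -> P x' n) ->
  (forall z, Z z -> exists2 n, (0 < n)%N & P z n) ->
  exists M, forall z, Z z -> exists2 n, (0 < n <= M)%N & P z n.
Proof.
move=> cZ hP good; apply: contrapT => nounif.
have bad M : exists z, Z z /\ forall n, (0 < n <= M)%N -> ~ P z n.
  apply: contrapT => hM; apply: nounif; exists M => z Zz.
  apply: contrapT => hz; apply: hM; exists z; split => // n nM Pn.
  by apply: hz; exists n.
have [zs hzs] := choice bad; have [zl hzl] := cluster_point zs.
have Zzl : Z zl.
  apply: contrapT => nZ; have [n hn] := cZ zl nZ.
  have [M _ hM] := hzl n 0%N.
  by apply: (hn (zs M)) => [j /hM|]; last case: (hzs M).
have [n n0 Pn] := good zl Zzl; have [M nM hM] := hzl (n + c)%N n.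
case: (hzs M) => _ /(_ n); apply; first by rewrite n0 nM.
by apply: hP Pn => j /hM ->.
Qed.

End Compactness.

Section LowerDensity.
Variables (R : realType) (A : finType).
Local Open Scope ring_scope.
Implicit Types x y : shseq A.

Lemma mismatch_freqE x y n : mismatch_freq R x y n = (mism x y n)%:R / n%:R.
Proof.
rewrite /mismatch_freq /mism -sum1_count big_mkcond /=.
rewrite -(big_mkord xpredT (fun i => nat_of_bool (x i != y i))) /index_iota subn0.
by congr (_%:R / _); apply: eq_bigr => i _; case: (_ != _).
Qed.

Lemma mismatch_freq_ge0 x y n : 0 <= mismatch_freq R x y n.
Proof. by rewrite mismatch_freqE divr_ge0. Qed.

Lemma mismatch_freq_le1 x y n : mismatch_freq R x y n <= 1.
Proof.
rewrite mismatch_freqE; case: n => [|n]; first by rewrite invr0 mulr0.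
rewrite ler_pdivrMr ?ltr0Sn // mul1r ler_nat.
rewrite -[leqRHS]muln1 -[in leqRHS](card_ord n.+1) -sum_nat_const.
by apply: leq_sum => i _; case: (_ != _).
Qed.

Lemma mismatch_freq_bounded x y : bounded_fun (mismatch_freq R x y).
Proof.
apply: filterS (nbhs_pinfty_ge (r := 1) (real1 R)) => M M1 n _ /=.
by rewrite ger0_norm ?mismatch_freq_ge0 // (le_trans (mismatch_freq_le1 x y n)).
Qed.

Lemma infs_le_dlow x y N : infs (mismatch_freq R x y) N <= dlow R x y.
Proof.
rewrite /dlow (limn_infE (mismatch_freq_bounded x y)); apply: ub_le_sup.
  exact: bounded_fun_has_ubound_infs (mismatch_freq_bounded x y).
by exists N.
Qed.

Lemma dlow_ge0 x y : 0 <= dlow R x y.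
Proof.
apply: le_trans (infs_le_dlow x y 0); apply: lb_le_inf.
  by exists (mismatch_freq R x y 0); exists 0%N.
by move=> _ [k _ <-]; apply: mismatch_freq_ge0.
Qed.

Lemma dlow_le1 x y : dlow R x y <= 1.
Proof.
rewrite /dlow (limn_infE (mismatch_freq_bounded x y)); apply: ge_sup.
  by exists (infs (mismatch_freq R x y) 0); exists 0%N.
move=> _ [n _ <-]; apply: le_trans (mismatch_freq_le1 x y n).
apply: ge_inf; last by exists n => /=.
by exists 0 => _ [k _ <-]; apply: mismatch_freq_ge0.
Qed.

Lemma dlow_sym x y : dlow R x y = dlow R y x.
Proof.
rewrite /dlow; congr limn_inf; apply/funext => n; rewrite /mismatch_freq.
by congr (_%:R / _); apply: eq_count => j; rewrite eq_sym.
Qed.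

Lemma dlow_lt x y e : dlow R x y < e ->
  forall N, exists2 n, (N <= n)%N & mismatch_freq R x y n < e.
Proof.
move=> he N; have := le_lt_trans (infs_le_dlow x y N) he.
case/inf_lt => [|_ [n /= Nn <-] hn]; last by exists n.
by exists (mismatch_freq R x y N); exists N => /=.
Qed.

Lemma sup_inf_lt (T1 T2 : Type) (S : set T1) (T : set T2) (f : T1 -> T2 -> R) e :
  T !=set0 -> (forall a b, 0 <= f a b <= 1) ->
  sup [set inf [set f a b | b in T] | a in S] < e ->
  forall a, S a -> exists2 b, T b & f a b < e.
Proof.
move=> [b0 Tb0] f01 hsup a Sa.
have lb a' : has_lbound [set f a' b | b in T].
  by exists 0 => _ [b _ <-]; case/andP: (f01 a' b).
have : inf [set f a b | b in T] <= sup [set inf [set f a b | b in T] | a in S].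
  apply: ub_le_sup; last by exists a.
  exists 1 => _ [a' _ <-]; apply: le_trans (_ : f a' b0 <= 1).
    by apply: ge_inf; [apply: lb | exists b0].
  by case/andP: (f01 a' b0).
move/le_lt_trans/(_ hsup) => /inf_lt [|_ [b Tb <-] hb]; last by exists b.
by exists (f a b0); exists b0.
Qed.

Lemma dlowH_lt (Z W : set (shseq A)) e : W !=set0 -> Z !=set0 ->
  dlowH R Z W < e ->
  (forall a, Z a -> exists2 b, W b & dlow R a b < e) /\
  (forall b, W b -> exists2 a, Z a & dlow R b a < e).
Proof.
move=> nW nZ; rewrite /dlowH gt_max => /andP [hZW hWZ].
have d01 x y : 0 <= dlow R x y <= 1 by rewrite dlow_ge0 dlow_le1.
split; first exact: sup_inf_lt hZW.
move=> b Wb; have [a Za hab] := sup_inf_lt (f := fun b a => dlow R a b) nZ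
  (fun _ _ => d01 _ _) hWZ Wb.
by exists a; rewrite // dlow_sym.
Qed.

End LowerDensity.

Section Transfer.
Variables (R : realType) (A : finType).
Local Open Scope ring_scope.

(* Greedy concatenation: if every point of an invariant set Z has a window of
   length at most M with visit frequency at most r, then all visit counts on Z
   are at most r N + M. *)
Lemma occ_greedy (C Z : set (shseq A)) (r : R) M : 0 <= r ->
  (forall i z, Z z -> Z (shiftn i z)) ->
  (forall z, Z z -> exists2 n, (0 < n <= M)%N & (occ C z n)%:R <= r * n%:R) ->
  forall N z, Z z -> (occ C z N)%:R <= r * N%:R + M%:R.
Proof.
move=> r0 iZ hM N; elim/ltn_ind: N => N IH z Zz.
have [NM | MN] := leqP N M.
  have : (occ C z N)%:R <= N%:R :> R by rewrite ler_nat occ_le.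
  have : N%:R <= M%:R :> R by rewrite ler_nat.
  have : 0 <= r * N%:R by rewrite mulr_ge0.
  lra.
have [n /andP [n0 nM] hn] := hM z Zz.
have nN : (n <= N)%N by apply: leq_trans nM (ltnW MN).
have Nn : (N - n < N)%N by lia.
have rest := IH (N - n)%N Nn (shiftn n z) (iZ n z Zz).
rewrite -{1}(subnKC nN) occ_cat natrD.
move: rest hn; rewrite natrB // mulrBr; lra.
Qed.

(* Take a long prefix n where z and w differ at density < e and
   n' = n - m: then occ z n' <= occ w n' + m mism(n) <= r n' + M + m e n,
   where M < e n' and m e n = m e (n' + m) <= 2 m e n'. *)
Lemma good_window m (C : set (shseq A)) : finitary m C ->
  forall (r : R) M e z w, 0 < e ->
  (forall N, (occ C w N)%:R <= r * N%:R + M%:R) -> dlow R z w < e ->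
  exists2 n, (0 < n)%N & (occ C z n)%:R <= (r + (2 * m + 1)%:R * e) * n%:R.
Proof.
move=> hC r M e z w e0 hw hzw.
pose K := (Num.truncn (M%:R / e)).+1.
have hK : M%:R < e * K%:R by rewrite mulrC -ltr_pdivrMr // truncnS_gt.
have [n Kn hn] := dlow_lt hzw (K + 2 * m + 1)%N.
exists (n - m)%N; first by lia.
set n' := (n - m)%N; have nn' : n = (n' + m)%N by rewrite /n'; lia.
have cmp := occ_mism_bound hC z w n'; rewrite -nn' in cmp.
have w_bound := hw n'.
have mism_small : (mism z w n)%:R < e * n%:R.
  by move: hn; rewrite mismatch_freqE ltr_pdivrMr ?ltr0n //; lia.
have Kn' : (K <= n')%N by rewrite /n'; lia.
have mn' : (m <= n')%N by rewrite /n'; lia.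
move: cmp Kn' mn'; rewrite -!(ler_nat R) natrD natrM => cmp Kn' mn'.
have nsum : n%:R = n'%:R + m%:R :> R by rewrite nn' natrD.
have m0 : 0 <= m%:R :> R by [].
have eK : e * K%:R <= e * n'%:R by rewrite ler_wpM2l // ltW.
have emism : m%:R * (mism z w n)%:R <= m%:R * (e * n%:R) :> R.
  by rewrite ler_wpM2l // ltW.
have emm : m%:R * e * m%:R <= m%:R * e * n'%:R :> R.
  by rewrite ler_wpM2l // mulr_ge0 // ltW.
rewrite natrD natrM; rewrite nsum in emism.
nra.
Qed.

Lemma transfer (Z W C : set (shseq A)) m (r : R) M e : finitary m C ->
  0 <= r -> 0 < e -> shclosed Z -> (forall i z, Z z -> Z (shiftn i z)) ->
  (forall w N, W w -> (occ C w N)%:R <= r * N%:R + M%:R) ->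
  (forall z, Z z -> exists2 w, W w & dlow R z w < e) ->
  exists M', forall N z, Z z ->
    (occ C z N)%:R <= (r + (2 * m + 1)%:R * e) * N%:R + M'%:R.
Proof.
move=> hC r0 e0 cZ iZ hW hZW.
have r'0 : 0 <= r + (2 * m + 1)%:R * e by rewrite addr_ge0 // mulr_ge0 // ltW.
have [M' hM'] : exists M', forall z, Z z -> exists2 n, (0 < n <= M')%N &
    (occ C z n)%:R <= (r + (2 * m + 1)%:R * e) * n%:R.
  apply: (@compact_uniform _ Z _ m cZ) => [x x' n hx | z Zz].
    by rewrite (occ_agree hC hx).
  have [w Ww hzw] := hZW z Zz.
  by apply: (good_window hC) e0 _ hzw => N; apply: hW.
by exists M'; apply: occ_greedy r'0 iZ hM'.
Qed.

End Transfer.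

Section InvariantMeasures.
Variables (R : realType) (A : finType) (a0 : A).
Local Open Scope ring_scope.

Lemma le_of_affine_bound (c r M : R) :
  (forall N : nat, N%:R * c <= r * N%:R + M) -> c <= r.
Proof.
move=> hN; rewrite leNgt; apply/negP => rc.
pose N := (Num.truncn (M / (c - r))).+1.
have hM : M < (c - r) * N%:R.
  by rewrite mulrC -ltr_pdivrMr ?subr_gt0 // truncnS_gt.
by have := hN N; move: hM; rewrite mulrBl; lra.
Qed.

Lemma open_measurable (U : set (shseq A)) : shopen U ->
  measurable (U : set (borel_shseq a0)).
Proof. exact: sub_sigma_algebra. Qed.

Lemma closed_measurable (X : set (shseq A)) : shclosed X ->
  measurable (X : set (borel_shseq a0)).
Proof.
by move=> cX; rewrite -[X]setCK; apply: measurableC; apply: open_measurable.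
Qed.

Lemma measure_setI_full (mu : probability (borel_shseq a0) R)
    (B X : set (borel_shseq a0)) :
  measurable B -> measurable X -> mu X = 1%E -> mu (B `&` X) = mu B.
Proof.
move=> mB mX muX.
have null : mu (B `\` X) = 0%E.
  apply/eqP; rewrite eq_le measure_ge0 andbT.
  have <- : mu (~` X) = 0%E by rewrite probability_setC // muX subee.
  apply: le_measure; rewrite ?inE; first exact: measurableD.
    exact: measurableC.
  by move=> x [].
by rewrite [RHS](measureDI mu mB mX) [Z in (Z + _)%E](_ : _ = 0%E) ?add0e.
Qed.

Variable mu : probability (borel_shseq a0) R.
Hypothesis mu_inv : forall B : set (borel_shseq a0), measurable B ->
  mu (@Defs.shift A @^-1` B) = mu B.

Lemma measure_shiftn_preimage m (C : set (shseq A)) i : finitary m C ->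
  mu (shiftn i @^-1` C : set (borel_shseq a0)) = mu C.
Proof.
move=> hC; elim: i => [|i IH].
  by congr (mu _); apply/funext => x; rewrite /preimage shiftn0.
have -> : shiftn i.+1 @^-1` C = @Defs.shift A @^-1` (shiftn i @^-1` C).
  by apply/funext => x; rewrite /preimage /= shiftnS.
rewrite mu_inv ?IH //; apply: open_measurable.
exact: finitary_open (finitary_shiftn_preimage (i := i) hC).
Qed.

(* With
   E_i = sigma^-i C, invariance gives N mu(C) = sum_(i < N) mu(E_i & X), which
   is the integral over X of occ C x N, hence at most r N + M. *)
Lemma measure_le_visit_rate (X C : set (shseq A)) m (r : R) M :
  shclosed X -> mu (X : set (borel_shseq a0)) = 1%E -> finitary m C ->
  (forall x N, X x -> (occ C x N)%:R <= r * N%:R + M%:R) ->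
  (mu (C : set (borel_shseq a0)) <= r%:E)%E.
Proof.
move=> cX muX hC hb; have mX := closed_measurable cX.
pose E i : set (borel_shseq a0) := shiftn i @^-1` C.
have mE i : measurable (E i).
  apply: open_measurable.
  exact: finitary_open (finitary_shiftn_preimage (i := i) hC).
have muEX i : mu (E i `&` X) = mu C.
  by rewrite measure_setI_full // (measure_shiftn_preimage _ hC).
have mC : measurable (C : set (borel_shseq a0)).
  by apply: open_measurable; apply: finitary_open hC.
have [c muC] : exists c, mu (C : set (borel_shseq a0)) = c%:E.
  exists (fine (mu (C : set (borel_shseq a0)))).
  rewrite fineK // ge0_fin_numE ?measure_ge0 //.
  by rewrite (le_lt_trans (probability_le1 mu mC)) ?ltry.
rewrite muC lee_fin; apply: (le_of_affine_bound (M := M%:R)) => N.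
have sum_bound : (\sum_(i < N) mu (E i `&` X) <= (r * N%:R + M%:R)%:E)%E.
  under eq_bigr => i _ do rewrite -(integral_indic mu mX (mE i)).
  rewrite -ge0_integral_sum // => [|i]; last first.
    apply/measurable_realfun.measurable_EFinP.
    exact: measurable_realfun.measurable_indic.
  apply: (@le_trans _ _ (\int[mu]_(x in X) cst (r * N%:R + M%:R)%:E x)%E).
    apply: ge0_le_integral => //.
    - by move=> x _; apply: sume_ge0 => i _; rewrite lee_fin indicE.
    - apply: emeasurable_sum => i; apply/measurable_realfun.measurable_EFinP.
      exact: measurable_realfun.measurable_indic.
    - move=> x Xx; rewrite sumEFin lee_fin; apply: le_trans (hb x N Xx).
      by rewrite /occ natr_sum; apply: ler_sum => i _; rewrite indicE.
  by rewrite integral_cst // [Z in (_ * Z)%E](_ : _ = 1%E) ?mule1.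
move: sum_bound; under eq_bigr => i _ do rewrite muEX muC.
by rewrite sumEFin lee_fin sumr_const card_ord mulr_natl.
Qed.

End InvariantMeasures.

Section AvoidingSets.
Variable A : finType.

Definition avoid (Y : set (shseq A)) m : set (shseq A) :=
  fun x => forall y, Y y -> exists2 j, (j < m)%N & x j != y j.

Lemma avoid_finitary Y m : finitary m (avoid Y m).
Proof.
move=> x x' hx avx y Yy; have [j jm neq] := avx y Yy.
by exists j; rewrite // -hx.
Qed.

Lemma avoid_disjoint Y m y : Y y -> ~ avoid Y m y.
Proof. by move=> Yy /(_ y Yy) [j _]; rewrite eqxx. Qed.

Lemma avoid_cover Y : shclosed Y -> ~` Y `<=` \bigcup_m avoid Y m.
Proof.
move=> cY x nYx; have [n hn] := cY x nYx; exists n => // y Yy.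
apply: contrapT => agree; apply: (hn y) => // i ilt.
apply/eqP; apply: contrapT => /negP neq; apply: agree.
by exists i; rewrite // eq_sym.
Qed.

End AvoidingSets.

Section Main.
Variables (R : realType) (A : finType) (a0 : A).
Local Open Scope ring_scope.

Lemma full_measure_of_avoid_null (mu : probability (borel_shseq a0) R)
    (Y : set (shseq A)) : shclosed Y ->
  (forall m, mu (avoid Y m : set (borel_shseq a0)) = 0%E) ->
  mu (Y : set (borel_shseq a0)) = 1%E.
Proof.
move=> cY null; have mY := closed_measurable (a0 := a0) cY.
have [N [mN N0 sN]] :
    mu.-negligible (\bigcup_m (avoid Y m : set (borel_shseq a0))).
  apply: negligible_bigcup => m; exists (avoid Y m); split => //.
    by apply: open_measurable; apply: finitary_open (@avoid_finitary _ Y m).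
  exact: null.
have nY0 : mu (~` (Y : set (borel_shseq a0))) = 0%E.
  apply/eqP; rewrite eq_le measure_ge0 andbT -N0.
  apply: le_measure; rewrite ?inE //; first exact: measurableC.
  by move=> x /(avoid_cover cY) /sN.
have := measureDI mu (@measurableT _ (borel_shseq a0)) mY.
rewrite setTD setTI [Z in (Z + _)%E](_ : _ = 0%E) ?add0e // => <-.
exact: probability_setT.
Qed.

(* The core estimate: mu(avoid Y m) <= 2 (2m+1) e for every e > 0, by
   transferring the visit count 0 on Y to X_k and then to X. *)
Lemma avoid_null (Xs : nat -> set (shseq A)) (X Y : set (shseq A))
    (mu : probability (borel_shseq a0) R) m :
  (forall k, shift_space (Xs k)) -> shift_space X -> shift_space Y ->
  (fun k => dlowH R (Xs k) X) @ \oo --> (0 : R) ->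
  (fun k => dlowH R (Xs k) Y) @ \oo --> (0 : R) ->
  Msigma a0 R X mu -> mu (avoid Y m : set (borel_shseq a0)) = 0%E.
Proof.
move=> hXs [nX cX iX] [nY cY iY] cvX cvY [mu_inv muX].
apply/eqP; rewrite eq_le measure_ge0 andbT.
apply/lee_addgt0Pr => eps eps0; rewrite add0e.
pose t : R := (2 * m + 1)%:R.
have t0 : 0 < t by rewrite ltr0n addn1.
pose e := eps / (2 * t).
have e0 : 0 < e by rewrite divr_gt0 // mulr_gt0.
have [k [/= kX kY]] := filter_ex (filterI
  (@cvgr_lt _ _ _ _ _ _ cvX _ e0) (@cvgr_lt _ _ _ _ _ _ cvY _ e0)).
have [nXk cXk iXk] := hXs k.
have [closeXkY _] := dlowH_lt nY nXk kY.
have [_ closeXXk] := dlowH_lt nX nXk kX.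
have onY w N : Y w -> (occ (avoid Y m) w N)%:R <= 0 * N%:R + 0%:R :> R.
  move=> Yw; rewrite (occ_disjoint (shiftn_invariant iY)) ?mul0r ?addr0 //.
  exact: avoid_disjoint.
have [M1 onXk] := transfer (@avoid_finitary _ Y m) (lexx 0) e0 cXk
  (shiftn_invariant iXk) onY closeXkY.
have r0 : 0 <= 0 + t * e by rewrite add0r mulr_ge0 // ltW.
have [M2 onX] := transfer (@avoid_finitary _ Y m) r0 e0 cX
  (shiftn_invariant iX) (fun w N Xkw => onXk N w Xkw) closeXXk.
apply: le_trans (measure_le_visit_rate mu_inv cX muX (@avoid_finitary _ Y m)
  (fun x N Xx => onX N x Xx)) _.
have -> : 0 + t * e + t * e = eps by rewrite /e; field; rewrite gt_eqF.
by [].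
Qed.

Lemma Msigma_sub (Xs : nat -> set (shseq A)) (X Y : set (shseq A)) :
  (forall k, shift_space (Xs k)) -> shift_space X -> shift_space Y ->
  (fun k => dlowH R (Xs k) X) @ \oo --> (0 : R) ->
  (fun k => dlowH R (Xs k) Y) @ \oo --> (0 : R) ->
  Msigma a0 R X `<=` Msigma a0 R Y.
Proof.
move=> hXs hX hY cvX cvY mu muX; split; first by case: muX.
apply: full_measure_of_avoid_null; first by case: hY.
by move=> m; apply: (avoid_null m hXs hX hY cvX cvY).
Qed.

End Main.

Local Open Scope ring_scope.

Theorem mainTheorem12 (R : realType) (A : finType) (a0 : A)
  (Xs : nat -> set (shseq A)) (X Y : set (shseq A)) :
  (forall k, shift_space (Xs k)) -> shift_space X -> shift_space Y ->
  (fun k => dlowH R (Xs k) X) @ \oo --> (0 : R) ->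
  (fun k => dlowH R (Xs k) Y) @ \oo --> (0 : R) ->
  Msigma a0 R X = Msigma a0 R Y.
Proof.
move=> hXs hX hY cvX cvY; rewrite eqEsubset.
by split; apply: Msigma_sub.
Qed.
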